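(* Let $(X,d,\kappa)$ be a digital metric space with $|X|>1$. Let $S,T:X\to X$ be such that $x\neq y$ implies $d(S(x),S(y))<d(T(x),T(y))$. Then $T$ is one-to-one. If, further, $X$ is finite, then $T$ is a bijection and $S$ is neither one-to-one nor onto.
   Context: A digital metric space is a triple $(X,d,\kappa)$ where $X\subset\mathbb{Z}^n$ for some positive integer $n$, $\kappa$ is an adjacency relation on $X$, and $d$ is a metric on $X$. *)

From HB Require Import structures.
From mathcomp Require Import all_boot all_order all_algebra.
From mathcomp Require Import classical_sets functions cardinality reals.
Set Implicit Arguments. Unset Strict Implicit. Unset Printing Implicit Defensive.
Import Order.TTheory GRing.Theory Num.Theory.
Local Open Scope classical_set_scope.
Local Open Scope ring_scope.

Definition zpoint (n : nat) := 'rV[int]_n.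

Definition is_metric_on (R : realType) (n : nat) (X : set (zpoint n))
  (d : zpoint n -> zpoint n -> R) : Prop :=
  [/\ (forall x y, X x -> X y -> 0 <= d x y),
      (forall x y, X x -> X y -> (d x y = 0 <-> x = y)),
      (forall x y, X x -> X y -> d x y = d y x) &
      (forall x y z, X x -> X y -> X z -> d x z <= d x y + d y z)].

Definition is_adjacency_on (n : nat) (X : set (zpoint n))
  (kappa : zpoint n -> zpoint n -> Prop) : Prop :=
  (forall x, X x -> ~ kappa x x) /\
  (forall x y, X x -> X y -> kappa x y -> kappa y x).

Definition digital_metric_space (R : realType) (n : nat) (X : set (zpoint n))
  (d : zpoint n -> zpoint n -> R) (kappa : zpoint n -> zpoint n -> Prop) : Prop :=
  is_metric_on X d /\ is_adjacency_on X kappa.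

(* T is injective because T x = T y with x <> y would give
   0 <= d (S x) (S y) < d (T x) (T x) = 0.  On a finite X, injectivity of T
   makes it a bijection.  If S were onto, some distinct x, y would be sent by S
   onto a pair of points at maximal distance in X; but T x, T y are distinct
   and farther apart, a contradiction.  Hence S is not onto, and therefore,
   X being finite, not one-to-one either. *)
From HB Require Import structures.
From mathcomp Require Import all_boot all_order all_algebra.
From mathcomp Require Import classical_sets functions cardinality reals.
From mathcomp Require Import finmap.
Import Order.TTheory GRing.Theory Num.Theory.
Local Open Scope classical_set_scope.
Local Open Scope ring_scope.

Lemma finite_set_inj_surj (T : choiceType) (A : set T) (f : T -> T) :
  finite_set A -> set_fun A A f -> set_inj A f -> set_surj A A f.
Proof.
move=> finA fA finj y Ay.
pose B := fset_set A.
have inB x : (x \in B) = (x \in A) by rewrite in_fset_set.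
have injB : {in B &, injective f} by move=> x1 x2; rewrite !inB; apply: finj.
have fBB : (f @` B `<=` B)%fset.
  by apply/fsubsetP => _ /imfsetP[x /= + ->]; rewrite !inB !in_setE => /fA.
have /eqP fB : (f @` B)%fset == B.
  by rewrite eqEfcard fBB card_in_imfset //= leqnn.
have : y \in (f @` B)%fset by rewrite fB inB in_setE.
by case/imfsetP => x /= + ->; rewrite inB in_setE; exists x.
Qed.

Lemma finite_set_argmax (T : choiceType) (disp : Order.disp_t)
    (U : orderType disp) (A : set T) (g : T -> U) :
  finite_set A -> A !=set0 -> exists2 a, A a & forall b, A b -> (g b <= g a)%O.
Proof.
move=> finA [a0 Aa0].
pose B := fset_set A.
have inB x : (x \in B) = (x \in A) by rewrite in_fset_set.
have a0B : a0 \in B by rewrite inB in_setE.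
have [a _ max_a] := @arg_maxP _ _ _ [` a0B]%fset predT (fun i : B => g (val i)) isT.
exists (val a); first by rewrite -in_setE -inB (valP a).
move=> b Ab; have bB : b \in B by rewrite inB in_setE.
exact: (max_a [` bB]%fset).
Qed.

Section DistanceDomination.
Context {R : realDomainType} {U : choiceType} {X : set U} {d : U -> U -> R}.
Context {S T : U -> U}.
Hypothesis d_ge0 : forall x y, X x -> X y -> 0 <= d x y.
Hypothesis d_xx : forall x, X x -> d x x = 0.
Hypotheses (SX : set_fun X X S) (TX : set_fun X X T).
Hypothesis dST : forall x y, X x -> X y -> x <> y -> d (S x) (S y) < d (T x) (T y).

Lemma dominating_map_inj : set_inj X T.
Proof.
move=> x y; rewrite !in_setE => Xx Xy Txy.
have [//|/eqP nxy] := eqVneq x y.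
have := dST x y Xx Xy nxy.
by rewrite Txy (d_xx _ (TX _ Xy)) ltNge (d_ge0 _ _ (SX _ Xx) (SX _ Xy)).
Qed.

Lemma dominated_map_not_surj :
  finite_set X -> (exists x y, X x /\ X y /\ x <> y) -> ~ set_surj X X S.
Proof.
move=> finX [x0 [y0 [Xx0 [Xy0 nxy0]]]] Ssurj.
pose P := [set p : U * U | [/\ X p.1, X p.2 & p.1 <> p.2]].
have finP : finite_set P.
  by apply: sub_finite_set (finite_setX finX finX) => p [].
have P0 : P !=set0 by exists (x0, y0).
have [[a b] [/= Xa Xb nab] max_ab] :=
  @finite_set_argmax _ _ _ P (fun p => d p.1 p.2) finP P0.
have [x Xx Sxa] := Ssurj a Xa; have [y Xy Syb] := Ssurj b Xb.
have nxy : x <> y by move=> exy; apply: nab; rewrite -Sxa -Syb exy.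
have nTxy : T x <> T y.
  by move/dominating_map_inj; rewrite !in_setE => /(_ Xx Xy).
have := dST x y Xx Xy nxy; rewrite Sxa Syb ltNge.
by rewrite (max_ab (T x, T y)) //; exact: And3 (TX _ Xx) (TX _ Xy) nTxy.
Qed.

End DistanceDomination.

Theorem proposition6p3 (R : realType) (n : nat) (X : set (zpoint n))
  (d : zpoint n -> zpoint n -> R) (kappa : zpoint n -> zpoint n -> Prop)
  (S T : zpoint n -> zpoint n) :
  digital_metric_space X d kappa ->
  (exists x y, X x /\ X y /\ x <> y) ->
  set_fun X X S -> set_fun X X T ->
  (forall x y, X x -> X y -> x <> y -> d (S x) (S y) < d (T x) (T y)) ->
  set_inj X T /\
  (finite_set X -> set_bij X X T /\ ~ set_inj X S /\ ~ set_surj X X S).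
Proof.
move=> [[d_ge0 d_eq0 _ _] _] X2 SX TX dST.
have d_xx x : X x -> d x x = 0 by move=> Xx; apply/(d_eq0 x x Xx Xx).
have Tinj := dominating_map_inj d_ge0 d_xx SX TX dST.
split=> // finX.
have Snsurj := dominated_map_not_surj d_ge0 d_xx SX TX dST finX X2.
split; first by split=> //; exact: finite_set_inj_surj.
by split=> // Sinj; apply/Snsurj/finite_set_inj_surj.
Qed.
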